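(* Let $H$ be a Hilbert space and let $A$ be a densely defined closed linear operator in $H$ (not necessarily selfadjoint). Let $Q:=AA^*$, $B:=(I+Q)^{-1}$ (a selfadjoint operator with $0\le B\le I$), and let $F$ denote the closure of the operator $(I+Q)^{-1}A$, originally defined on $D(A)$; $F$ is a bounded linear operator defined on all of $H$ with $\|F\|\le \frac12$. Let $N^*:=\{u: A^*u=0\}$. Let $f\in D(A)$, and for $\delta>0$ let $f_\delta\in H$ satisfy $\|f_\delta-f\|\le\delta$. Let $y$ be the unique minimal-norm solution of $By=Ff$. Define the iterates $$v_{n+1}=(I-B)v_n+Ff_\delta,\qquad n=0,1,2,\dots,$$ with an initial element $v_0\perp N^*$. If $n=n(\delta)$ is an integer with $\lim_{\delta\to0}n(\delta)=\infty$ and $\lim_{\delta\to0}[\delta\, n(\delta)]=0$, then, with $v_\delta:=v_{n(\delta)}$, $$\lim_{\delta\to0}\|v_\delta-y\|=0.$$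
   Context: $I$ denotes the identity operator on $H$; inequalities $0\le B\le I$ are in the sense of quadratic forms. The relation $v=Af$ is equivalent to $Bv=Ff$, so the theorem gives a stable method of computing the value $Af$ of the unbounded operator $A$ from noisy data $f_\delta$ (which need not lie in $D(A)$). *)

From HB Require Import structures.
From mathcomp Require Import all_boot all_order all_algebra.
From mathcomp Require Import all_classical all_reals all_analysis.
Set Implicit Arguments. Unset Strict Implicit. Unset Printing Implicit Defensive.
Import Order.TTheory GRing.Theory Num.Theory.
Import numFieldNormedType.Exports.
Local Open Scope classical_set_scope.
Local Open Scope ring_scope.

Section Hilbert.
Variables (R : realType) (V : completeNormedModType R).

(* ip is an inner product on V inducing the norm of V, so that (V, ip) is a
   (real) Hilbert space: V is complete for this norm. *)
Definition is_inner_product (ip : V -> V -> R) : Prop :=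
  (forall x y, ip x y = ip y x) /\
  (forall (a : R) (x y z : V), ip (a *: x + y) z = a * ip x z + ip y z) /\
  (forall x, ip x x = `|x| ^+ 2).

Definition linear_operator (D : set V) (A : V -> V) : Prop :=
  D 0 /\
  (forall (a : R) x y, D x -> D y -> D (a *: x + y)) /\
  (forall (a : R) x y, D x -> D y -> A (a *: x + y) = a *: A x + A y).

Definition densely_defined (D : set V) : Prop := closure D = setT.

Definition graph (D : set V) (A : V -> V) : set (V * V) :=
  [set p | D p.1 /\ p.2 = A p.1].

Definition closed_operator (D : set V) (A : V -> V) : Prop :=
  closed (graph D A).

Variable ip : V -> V -> R.

Definition adj_rel (D : set V) (A : V -> V) (u w : V) : Prop :=
  forall x, D x -> ip (A x) u = ip x w.
Definition adj_dom (D : set V) (A : V -> V) : set V :=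
  [set u | exists w, adj_rel D A u w].
Definition adj (D : set V) (A : V -> V) (u : V) : V :=
  xget 0 [set w | adj_rel D A u w].

Definition Q_dom (D : set V) (A : V -> V) : set V :=
  [set u | adj_dom D A u /\ D (adj D A u)].
Definition Q_op (D : set V) (A : V -> V) (u : V) : V := A (adj D A u).

Definition B_op (D : set V) (A : V -> V) (h : V) : V :=
  xget 0 [set u | Q_dom D A u /\ u + Q_op D A u = h].

Definition op_closure (D : set V) (T : V -> V) (h : V) : V :=
  xget 0 [set w | closure (graph D T) (h, w)].

Definition F_op (D : set V) (A : V -> V) : V -> V :=
  op_closure D (fun x => B_op D A (A x)).

Definition Nstar (D : set V) (A : V -> V) : set V :=
  [set u | adj_dom D A u /\ adj D A u = 0].

Definition iterates (D : set V) (A : V -> V) (v0 g : V) (k : nat) : V :=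
  iter k (fun v => v - B_op D A v + F_op D A g) v0.

End Hilbert.

From HB Require Import structures.
From mathcomp Require Import all_boot all_order all_algebra.
From mathcomp Require Import all_classical all_reals all_analysis.
From mathcomp Require Import ring lra.
Set Implicit Arguments. Unset Strict Implicit. Unset Printing Implicit Defensive.
Import Order.TTheory GRing.Theory Num.Theory.
Import numFieldNormedType.Exports.
Local Open Scope classical_set_scope.
Local Open Scope ring_scope.

(** The resolvent B = (I + AA^* )^-1 is obtained variationally: since the graph
    of A is closed, |x|^2 + |Ax - h|^2 has a minimizer x on D(A), and its
    Euler-Lagrange equation says that u := h - Ax lies in D(A^* ) with A^* u = x,
    i.e. u + AA^* u = h.  B is symmetric and injective, and T := I - B satisfies
    |Th|^2 <= (Th, h); hence (T^k x, x) is nonincreasing and nonnegative, the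
    sequence T^k x is Cauchy, and its limit is a fixed point of T, that is 0.
    As 2|BAx| <= |x|, the closure F of BA is nonexpansive.  Writing the iteration
    as v_(k+1) = T v_k + F f_delta and y = T y + F f gives
    |v_n - y| <= n delta + |T^n (v_0 - y)|, and both terms vanish.  Injectivity
    of B makes y the only solution of By = Ff and gives T^n x -> 0 for every x. *)

Lemma quad_ge0_lin_eq0 (R : realFieldType) (b c : R) :
  0 <= b -> (forall t, 0 <= 2 * t * c + t ^+ 2 * b) -> c = 0.
Proof.
move=> b0 quad_ge0; have b1 : 0 < b + 1 by lra.
have := quad_ge0 (- c / (b + 1)).
have -> : 2 * (- c / (b + 1)) * c + (- c / (b + 1)) ^+ 2 * b
          = - (c ^+ 2 * (b + 2)) / (b + 1) ^+ 2 by field; lra.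
rewrite pmulr_lge0 ?invr_gt0 ?exprn_gt0 // oppr_ge0 => le0.
by apply/eqP; rewrite -sqrf_eq0 eq_le sqr_ge0 andbT; nra.
Qed.

Lemma inf_seq_cvg (R : realType) (S : set R) : S !=set0 -> has_lbound S ->
  exists2 u : nat -> R, (forall k, S (u k)) & u @ \oo --> inf S.
Proof.
move=> S0 Slb.
have /choice[u Su] k : exists r, S r /\ r < inf S + k.+1%:R^-1.
  have k0 : 0 < k.+1%:R^-1 :> R by rewrite invr_gt0.
  by have [r Sr ltr] := inf_adherent k0 (conj S0 Slb); exists r.
exists u => [k|]; first by case: (Su k).
apply: (@squeeze_cvgr _ _ _ _ (cst (inf S)) (fun k => inf S + k.+1%:R^-1)).
- apply: nearW => k; have [Suk ltk] := Su k.
  by rewrite /= (ltW ltk) andbT; apply: ge_inf.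
- exact: cvg_cst.
- by rewrite -[X in _ --> X]addr0; apply: cvgD; [exact: cvg_cst | exact: cvg_harmonic].
Qed.

Lemma cauchy_sqr_cvg (R : realType) (V : completeNormedModType R)
    (u : nat -> V) (b : nat -> R) : b @ \oo --> 0 ->
  (forall k l, `|u k - u l| ^+ 2 <= b k + b l) -> exists z : V, u @ \oo --> z.
Proof.
move=> b0 ub.
suff : cauchy_ex (u @ \oo) by move=> /cauchy_exP/cauchy_cvg ucvg; exists (limn u).
move=> e e0; have e2 : 0 < e ^+ 2 / 2 by rewrite divr_gt0 // exprn_gt0.
have bsmall : \forall k \near \oo, `|b k| < e ^+ 2 / 2.
  by near=> k; rewrite -normrN -sub0r; near: k; exact: cvgr_dist_lt.
have [N bN] := filter_ex bsmall.
exists (u N); apply: filterS bsmall => k bk; rewrite /= -ball_normE /=.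
rewrite -(@ltr_pXn2r _ 2) ?nnegrE ?(ltW e0) //.
by have := ub N k; have := ler_norm (b N); have := ler_norm (b k); lra.
Unshelve. all: by end_near.
Qed.

Section NonexpansiveExtension.
Variables (R : realType) (V : completeNormedModType R) (D : set V) (S : V -> V).
Hypothesis D_dense : densely_defined D.
Hypothesis S_nonexpansive :
  forall x x', D x -> D x' -> `|S x - S x'| <= `|x - x'|.

Lemma closure_graph_le g w f :
  closure (graph D S) (g, w) -> D f -> `|w - S f| <= `|g - f|.
Proof.
rewrite closureEcvg => -[G PG [Ggw GD]] Df.
have G1 : p.1 @[p --> G] --> g by exact: (cvg_comp _ _ Ggw cvg_fst).
have G2 : p.2 @[p --> G] --> w by exact: (cvg_comp _ _ Ggw cvg_snd).
have lim_gap : (fun p => `|p.2 - S f| - `|p.1 - f|) @ G --> `|w - S f| - `|g - f|.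
  by apply: cvgB; apply: cvg_norm; apply: cvgB => //; exact: cvg_cst.
rewrite -subr_le0; apply: (closed_cvg _ (@closed_le R 0) _ _ lim_gap).
by apply: GD => -[x _] [/= Dx ->]; rewrite /= subr_le0 S_nonexpansive.
Qed.

Lemma closure_graph_ex g : exists w, closure (graph D S) (g, w).
Proof.
have : closure D g by rewrite D_dense.
rewrite closureEcvg => -[G PG [Gg GD]].
have GD' : G D by exact: GD.
have : cauchy_ex (S @ G).
  move=> e e0; have e2 : 0 < e / 2 by rewrite divr_gt0.
  have Gball : G (D `&` ball g (e / 2)) by apply: filterI => //; exact/Gg/nbhsx_ballx.
  have [x0 [Dx0 gx0]] : exists x0, D x0 /\ ball g (e / 2) x0 := filter_ex Gball.
  exists (S x0); apply: (@filterS _ G _ (D `&` ball g (e / 2))) => // x [Dx gx] /=.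
  move: gx0 gx; rewrite -!ball_normE /= => gx0 gx.
  have := S_nonexpansive Dx0 Dx; have := ler_distD g x0 x.
  by rewrite distrC in gx0; lra.
move=> /cauchy_exP/cauchy_cvg Scvg; exists (lim (S @ G)).
have graph_cvg : (x, S x) @[x --> G] --> (g, lim (S @ G)) by exact: cvg_pair.
apply: (closed_cvg _ (@closed_closure _ (graph D S)) _ _ graph_cvg).
by apply: (@filterS _ G _ D) => // x Dx; apply: subset_closure.
Qed.

Lemma op_closureE f : D f -> op_closure D S f = S f.
Proof.
move=> Df; apply: xget_unique => [|w /closure_graph_le /(_ Df)].
  by apply: subset_closure.
by rewrite subrr normr0 normr_le0 subr_eq0 => /eqP.
Qed.

Lemma op_closure_le g f : D f ->
  `|op_closure D S g - op_closure D S f| <= `|g - f|.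
Proof.
move=> Df; rewrite (op_closureE Df); apply: (closure_graph_le _ Df).
exact: (xgetPex 0 (closure_graph_ex g)).
Qed.

End NonexpansiveExtension.

Lemma iter_affine_dist (R : realType) (V : normedModType R) (T : V -> V)
    (c c0 y v0 : V) :
  {morph T : x y / x - y} -> (forall x, `|T x| <= `|x|) -> y = T y + c0 ->
  forall k, `|iter k (fun v => T v + c) v0 - y - iter k T (v0 - y)|
    <= k%:R * `|c - c0|.
Proof.
move=> T_sub T_le yE; elim=> [|k IH]; first by rewrite /= subrr normr0 mul0r.
rewrite !iterS; set v := iter k _ v0; set t := iter k T (v0 - y).
have -> : T v + c - y - T t = T (v - y - t) + (c - c0).
  rewrite !T_sub [in LHS]yE opprD !addrA.
  by rewrite (addrAC (T v)) (addrAC _ (- c0)) (addrAC (T v - T y)).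
rewrite -nat1r mulrDl mul1r [leRHS]addrC.
exact: le_trans (ler_normD _ _) (lerD (le_trans (T_le _) IH) (lexx _)).
Qed.

Section HilbertSpace.
Variables (R : realType) (V : completeNormedModType R) (ip : V -> V -> R).
Hypothesis ip_inner : is_inner_product ip.

Lemma ipC x y : ip x y = ip y x.
Proof. by case: ip_inner. Qed.

Lemma ipxx x : ip x x = `|x| ^+ 2.
Proof. by case: ip_inner => _ []. Qed.

Lemma ipDZl (a : R) x y z : ip (a *: x + y) z = a * ip x z + ip y z.
Proof. by case: ip_inner => _ []. Qed.

Lemma ip0l z : ip 0 z = 0.
Proof. by have := ipDZl 1 0 0 z; rewrite scaler0 addr0 mul1r; lra. Qed.

Lemma ipDl x y z : ip (x + y) z = ip x z + ip y z.
Proof. by rewrite -{1}(scale1r x) ipDZl mul1r. Qed.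

Lemma ipZl a x z : ip (a *: x) z = a * ip x z.
Proof. by rewrite -(addr0 (a *: x)) ipDZl ip0l addr0. Qed.

Lemma ipNl x z : ip (- x) z = - ip x z.
Proof. by rewrite -scaleN1r ipZl mulN1r. Qed.

Lemma ipBl x y z : ip (x - y) z = ip x z - ip y z.
Proof. by rewrite ipDl ipNl. Qed.

Lemma ip0r z : ip z 0 = 0.
Proof. by rewrite ipC ip0l. Qed.

Lemma ipDr x y z : ip z (x + y) = ip z x + ip z y.
Proof. by rewrite ipC ipDl !(ipC z). Qed.

Lemma ipZr a x z : ip z (a *: x) = a * ip z x.
Proof. by rewrite ipC ipZl ipC. Qed.

Lemma ipBr x y z : ip z (x - y) = ip z x - ip z y.
Proof. by rewrite ipC ipBl !(ipC z). Qed.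

Lemma sqr_normD x y : `|x + y| ^+ 2 = `|x| ^+ 2 + 2 * ip x y + `|y| ^+ 2.
Proof. by rewrite -!ipxx ipDl !ipDr (ipC y x); ring. Qed.

Lemma sqr_normB x y : `|x - y| ^+ 2 = `|x| ^+ 2 - 2 * ip x y + `|y| ^+ 2.
Proof. by rewrite -!ipxx ipBl !ipBr (ipC y x); ring. Qed.

Lemma cauchy_schwarz x y : ip x y <= `|x| * `|y|.
Proof.
have [->|x0] := eqVneq x 0; first by rewrite ip0l normr0 mul0r.
have [->|y0] := eqVneq y 0; first by rewrite ip0r normr0 mulr0.
have nxy : 0 < `|y| * `|x| by rewrite mulr_gt0 ?normr_gt0.
have := sqr_ge0 (Num.norm (`|y| *: x - `|x| *: y)).
rewrite sqr_normB !normrZ !normr_id ipZl ipZr => nonneg.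
by rewrite -subr_ge0 -(pmulr_rge0 _ nxy); nra.
Qed.

Lemma parallelogram (x y : V) :
  `|x - y| ^+ 2 = 2 * `|x| ^+ 2 + 2 * `|y| ^+ 2 - 4 * `|(2^-1 : R) *: (x + y)| ^+ 2.
Proof. by rewrite normrZ exprMn sqr_normB sqr_normD ger0_norm ?invr_ge0 //; field. Qed.

Section PositiveContraction.
Variable T : V -> V.
Hypothesis T_sub : {morph T : x y / x - y}.
Hypothesis T_sym : forall x y, ip (T x) y = ip x (T y).
Hypothesis sqr_norm_T_le : forall x, `|T x| ^+ 2 <= ip (T x) x.

Lemma ip_T_ge0 x : 0 <= ip (T x) x.
Proof. exact: le_trans (sqr_ge0 _) (sqr_norm_T_le x). Qed.

Lemma norm_T_le x : `|T x| <= `|x|.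
Proof.
have := le_trans (sqr_norm_T_le x) (cauchy_schwarz (T x) x).
have := normr_ge0 (T x); have := normr_ge0 x; nra.
Qed.

Lemma ip_T_le x : ip (T x) x <= `|x| ^+ 2.
Proof.
have := cauchy_schwarz (T x) x; have := norm_T_le x.
have := normr_ge0 x; nra.
Qed.

Lemma T_continuous : continuous T.
Proof.
move=> z; apply/cvgrPdist_lt => e e0; near=> x.
rewrite -T_sub; apply: le_lt_trans (norm_T_le _) _.
by near: x; exact: (cvgr_dist_lt _ _ cvg_id).
Unshelve. all: by end_near.
Qed.

Variable x : V.

Lemma ip_iter i j : ip (iter i T x) (iter j T x) = ip (iter (i + j) T x) x.
Proof.
elim: i j => [|i IH] j; first by rewrite add0n ipC.
by rewrite iterS T_sym -iterS IH addSnnS.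
Qed.

Lemma ip_iter_ge0 k : 0 <= ip (iter k T x) x.
Proof.
rewrite -(odd_double_half k) -addnn; case: (odd k); rewrite ?add1n ?add0n.
  by rewrite -addSn -ip_iter iterS ip_T_ge0.
by rewrite -ip_iter ipxx sqr_ge0.
Qed.

Lemma ip_iter_nonincreasing : nonincreasing_seq (fun k => ip (iter k T x) x).
Proof.
apply/nonincreasing_seqP => k /=.
rewrite -(odd_double_half k) -addnn; case: (odd k); rewrite ?add1n ?add0n.
  rewrite -iterS -addnS -addSn -!ip_iter iterS ipxx -T_sym.
  exact: sqr_norm_T_le.
by rewrite -iterS -addSn -!ip_iter iterS ipxx ip_T_le.
Qed.

Lemma iter_cvg : exists z : V, iter k T x @[k --> \oo] --> z.
Proof.
pose a k := ip (iter k T x) x.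
have a_lb : has_lbound (range a) by exists 0 => _ [k _ <-]; exact: ip_iter_ge0.
have a_cvg := nonincreasing_cvgn ip_iter_nonincreasing a_lb.
apply: (@cauchy_sqr_cvg _ _ _ (fun k => a k - inf (range a))).
  by rewrite -(subrr (inf (range a))); apply: cvgB => //; exact: cvg_cst.
move=> k l; rewrite sqr_normB -!ipxx !ip_iter.
(* |T^k x - T^l x|^2 = a (2k) - 2 a (k + l) + a (2l) with a (2k) <= a k *)
have := ip_iter_nonincreasing (leq_addr k k).
have := ip_iter_nonincreasing (leq_addr l l).
have : inf (range a) <= a (k + l)%N by apply: ge_inf => //; exists (k + l)%N.
rewrite /a; lra.
Qed.

Lemma iter_cvg_fixed z : iter k T x @[k --> \oo] --> z -> T z = z.
Proof.
move=> xz; have Txz := cvg_comp _ _ xz (@T_continuous z).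
have : iter k.+1 T x @[k --> \oo] --> z by rewrite (cvg_shiftS (fun k => iter k T x)).
exact: cvg_unique Txz.
Qed.

Lemma iter_cvg0 : (forall z, T z = z -> z = 0) -> iter k T x @[k --> \oo] --> 0.
Proof.
by move=> fix0; have [z xz] := iter_cvg; rewrite -(fix0 z (iter_cvg_fixed xz)).
Qed.

End PositiveContraction.

Section ClosedOperator.
Variables (DA : set V) (A : V -> V).
Hypothesis A_linear : linear_operator DA A.
Hypothesis A_dense : densely_defined DA.
Hypothesis A_closed : closed_operator DA A.

Lemma DA0 : DA 0.
Proof. by case: A_linear. Qed.

Lemma DA_lin a x y : DA x -> DA y -> DA (a *: x + y).
Proof. by case: A_linear => _ [+ _]; apply. Qed.

Lemma A_lin a x y : DA x -> DA y -> A (a *: x + y) = a *: A x + A y.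
Proof. by case: A_linear => _ [_]; apply. Qed.

Lemma DAZ a x : DA x -> DA (a *: x).
Proof. by move=> Dx; rewrite -[_ *: x]addr0; apply: DA_lin DA0. Qed.

Lemma DAD x y : DA x -> DA y -> DA (x + y).
Proof. by move=> Dx Dy; rewrite -[x]scale1r; apply: DA_lin. Qed.

Lemma DAB x y : DA x -> DA y -> DA (x - y).
Proof. by move=> Dx Dy; rewrite addrC -scaleN1r; apply: DA_lin. Qed.

Lemma A0 : A 0 = 0.
Proof.
have := A_lin 1 DA0 DA0; rewrite scaler0 addr0 scale1r => /eqP.
by rewrite -subr_eq0 opprD addrA subrr sub0r oppr_eq0 => /eqP.
Qed.

Lemma AZ a x : DA x -> A (a *: x) = a *: A x.
Proof. by move=> Dx; have := A_lin a Dx DA0; rewrite !addr0 A0 addr0. Qed.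

Lemma AD x y : DA x -> DA y -> A (x + y) = A x + A y.
Proof. by move=> Dx Dy; have := A_lin 1 Dx Dy; rewrite !scale1r. Qed.

Lemma AB x y : DA x -> DA y -> A (x - y) = A x - A y.
Proof. by move=> Dx Dy; rewrite addrC -scaleN1r A_lin // scaleN1r addrC. Qed.

Lemma closed_graph_cvg (xs : nat -> V) x z : (forall k, DA (xs k)) ->
  xs k @[k --> \oo] --> x -> A (xs k) @[k --> \oo] --> z -> DA x /\ z = A x.
Proof.
move=> Dxs xs_cvg Axs_cvg.
have graph_cvg : (xs k, A (xs k)) @[k --> \oo] --> (x, z) by exact: cvg_pair.
apply: (closed_cvg _ A_closed _ _ graph_cvg).
by apply: nearW => k; rewrite /graph /=.
Qed.

Lemma orth_dom_eq0 w : (forall x, DA x -> ip x w = 0) -> w = 0.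
Proof.
move=> w_orth; apply/normr0_eq0/eqP; rewrite eq_le normr_ge0 andbT leNgt.
apply/negP => w_pos.
have : closure DA w by rewrite A_dense.
move=> /(_ _ (nbhsx_ballx w _ w_pos)) [x [Dx]]; rewrite -ball_normE /= => wx.
have : `|w| ^+ 2 <= `|w - x| * `|w|.
  by rewrite -ipxx -[leLHS]subr0 -(w_orth x Dx) -ipBl cauchy_schwarz.
by rewrite expr2 ler_pM2r //; apply/negP; rewrite -ltNge.
Qed.

Local Notation adj_rel := (adj_rel ip DA A).

Lemma adj_rel_unique u w1 w2 : adj_rel u w1 -> adj_rel u w2 -> w1 = w2.
Proof.
move=> uw1 uw2; apply/eqP; rewrite -subr_eq0; apply/eqP/orth_dom_eq0 => x Dx.
by rewrite ipBr -uw1 // -uw2 // subrr.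
Qed.

Lemma adjE u w : adj_rel u w -> adj ip DA A u = w.
Proof. by move=> uw; apply: xget_unique => // w' /adj_rel_unique; apply. Qed.

Lemma adj_relB u1 u2 w1 w2 :
  adj_rel u1 w1 -> adj_rel u2 w2 -> adj_rel (u1 - u2) (w1 - w2).
Proof. by move=> uw1 uw2 x Dx; rewrite !ipBr uw1 // uw2. Qed.

Lemma adj_rel0 : adj_rel 0 0.
Proof. by move=> x Dx; rewrite !ip0r. Qed.

Lemma adj_rel_ipD u w : adj_rel u w -> DA w ->
  ip (u + A w) u = `|u| ^+ 2 + `|w| ^+ 2.
Proof. by move=> uw Dw; rewrite ipDl uw // !ipxx. Qed.

Definition energy (h x : V) : R := `|x| ^+ 2 + `|A x - h| ^+ 2.

Lemma energy_ge0 h x : 0 <= energy h x.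
Proof. by rewrite addr_ge0 ?sqr_ge0. Qed.

Lemma energy_midpoint h m x1 x2 : (forall x, DA x -> m <= energy h x) ->
  DA x1 -> DA x2 ->
  `|x1 - x2| ^+ 2 + `|A x1 - A x2| ^+ 2
    <= 2 * (energy h x1 - m) + 2 * (energy h x2 - m).
Proof.
move=> m_lb D1 D2.
have Amid : A (2^-1 *: (x1 + x2)) - h = 2^-1 *: ((A x1 - h) + (A x2 - h)).
  rewrite (AZ _ (DAD D1 D2)) (AD D1 D2) addrACA -opprD -mulr2n -(scaler_nat 2 h).
  by rewrite scalerBr scalerA mulVf ?pnatr_eq0 // scale1r.
have := m_lb _ (DAZ 2^-1 (DAD D1 D2)); rewrite /energy Amid.
have -> : A x1 - A x2 = (A x1 - h) - (A x2 - h) by rewrite opprB addrA subrK.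
rewrite parallelogram (parallelogram (A x1 - h)); lra.
Qed.

Lemma energy_minimizer h :
  exists2 x, DA x & forall xi, DA xi -> energy h x <= energy h xi.
Proof.
set m := inf (energy h @` DA).
have m_lb : has_lbound (energy h @` DA).
  by exists 0 => _ [x _ <-]; exact: energy_ge0.
have energy_m x : DA x -> m <= energy h x by move=> Dx; apply: ge_inf => //; exists x.
have [r r_in r_cvg] := inf_seq_cvg (ex_intro _ _ (imageP _ DA0)) m_lb.
have /choice[xs xsP] k : exists x, DA x /\ energy h x = r k.
  by case: (r_in k) => x Dx <-; exists x.
pose b k := 2 * (r k - m).
have b_cvg : b @ \oo --> 0.
  by rewrite -(mulr0 2) -(subrr m); apply: cvgMr; apply: cvgB => //; exact: cvg_cst.
have dist_le k l :
    `|xs k - xs l| ^+ 2 + `|A (xs k) - A (xs l)| ^+ 2 <= b k + b l.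
  have [[Dk _] [Dl _]] := (xsP k, xsP l).
  by rewrite /b -(xsP k).2 -(xsP l).2; exact: energy_midpoint.
have [x xs_cvg] : exists x : V, xs k @[k --> \oo] --> x.
  apply: (cauchy_sqr_cvg b_cvg) => k l; apply: le_trans (dist_le k l).
  by rewrite lerDl sqr_ge0.
have [z Axs_cvg] : exists z : V, A (xs k) @[k --> \oo] --> z.
  apply: (cauchy_sqr_cvg b_cvg) => k l; apply: le_trans (dist_le k l).
  by rewrite lerDr sqr_ge0.
have [Dx zE] := closed_graph_cvg (fun k => (xsP k).1) xs_cvg Axs_cvg.
exists x => // xi Dxi; apply: le_trans (energy_m _ Dxi).
have Axs_h : A (xs k) - h @[k --> \oo] --> A x - h.
  by rewrite -zE; apply: cvgB => //; exact: cvg_cst.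
have energy_cvg : energy h (xs k) @[k --> \oo] --> energy h x.
  by apply: cvgD; apply: cvgM; exact: cvg_norm.
have r_cvg' : energy h (xs k) @[k --> \oo] --> m.
  by apply: cvg_trans r_cvg; apply: near_eq_cvg; apply: nearW => k; rewrite (xsP k).2.
by rewrite (cvg_unique _ energy_cvg r_cvg').
Qed.

Lemma energy_min_orth h x : DA x ->
    (forall xi, DA xi -> energy h x <= energy h xi) ->
  forall xi, DA xi -> ip x xi + ip (A x - h) (A xi) = 0.
Proof.
move=> Dx x_min xi Dxi.
apply: (quad_ge0_lin_eq0 (b := `|xi| ^+ 2 + `|A xi| ^+ 2)).
  by rewrite addr_ge0 ?sqr_ge0.
move=> t; have := x_min _ (DA_lin t Dxi Dx).
rewrite /energy A_lin // -addrA !(addrC (t *: _)) !sqr_normD !ipZr !normrZ !exprMn.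
by rewrite real_normK ?num_real // !(ipC x) !(ipC (A x - h)); lra.
Qed.

Lemma resolvent_exists h : exists u, Q_dom ip DA A u /\ u + Q_op ip DA A u = h.
Proof.
have [x Dx x_min] := energy_minimizer h.
have adj_x : adj_rel (h - A x) x.
  move=> xi Dxi; have := energy_min_orth Dx x_min Dxi.
  by rewrite ipBl ipBr !(ipC (A xi)) (ipC xi); lra.
exists (h - A x); rewrite /Q_dom /Q_op (adjE adj_x) subrK.
by split=> //; rewrite /= (adjE adj_x); split=> //; exists x.
Qed.

Lemma resolvent_eq0 u w : adj_rel u w -> DA w -> u + A w = 0 -> u = 0.
Proof.
move=> uw Dw uw0; have := adj_rel_ipD uw Dw; rewrite uw0 ip0l => /esym/eqP.
rewrite paddr_eq0 ?sqr_ge0 // => /andP[/eqP + _].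
by move/eqP; rewrite sqrf_eq0 normr_eq0 => /eqP.
Qed.

Local Notation B := (B_op ip DA A).
Local Notation W h := (adj ip DA A (B h)).

Lemma B_opP h : [/\ adj_rel (B h) (W h), DA (W h) & B h + A (W h) = h].
Proof.
have [[[w uw] Dw] Bh] := xgetPex 0 (resolvent_exists h).
by move: Dw Bh; rewrite /Q_op (adjE uw) => Dw Bh; split.
Qed.

Lemma B_op_unique h u w : adj_rel u w -> DA w -> u + A w = h -> B h = u.
Proof.
move=> uw Dw uwh; have [uw' Dw' uwh'] := B_opP h.
apply/eqP; rewrite -subr_eq0; apply/eqP.
apply: (resolvent_eq0 (adj_relB uw' uw) (DAB Dw' Dw)).
by rewrite AB // addrACA -opprD uwh uwh' subrr.
Qed.

Lemma B_opB h g : B (h - g) = B h - B g.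
Proof.
have [uwh Dwh Bh] := B_opP h; have [uwg Dwg Bg] := B_opP g.
apply: (B_op_unique (adj_relB uwh uwg) (DAB Dwh Dwg)).
by rewrite AB // addrACA -opprD Bh Bg.
Qed.

Lemma B_op_sym h g : ip (B h) g = ip h (B g).
Proof.
have [uwh Dwh Bh] := B_opP h; have [uwg Dwg Bg] := B_opP g.
by rewrite -{1}Bg -{2}Bh ipDr ipDl uwg // (ipC (B h) (A _)) uwh // (ipC (W g)).
Qed.

Lemma ip_B_op h : ip (B h) h = `|B h| ^+ 2 + `|W h| ^+ 2.
Proof. by have [uw Dw Bh] := B_opP h; rewrite ipC -(adj_rel_ipD uw Dw) Bh. Qed.

Lemma B_op_inj h : B h = 0 -> h = 0.
Proof.
move=> Bh0; have [uw Dw Bh] := B_opP h; move: uw Dw Bh; rewrite Bh0 => uw Dw.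
by rewrite (adj_rel_unique uw adj_rel0) A0 addr0 => <-.
Qed.

Lemma norm_B_op_A x : DA x -> 2 * `|B (A x)| <= `|x|.
Proof.
move=> Dx; have [uw Dw BAx] := B_opP (A x).
have := adj_rel_ipD uw Dw; rewrite BAx uw // => ip_x_w.
have := cauchy_schwarz x (W (A x)); rewrite ip_x_w => le_xw.
rewrite -(@ler_pXn2r _ 2) ?nnegrE ?mulr_ge0 //.
by have := sqr_ge0 (`|x| - 2 * `|W (A x)|); nra.
Qed.

Lemma subB_op_morph : {morph (fun h => h - B h) : h g / h - g}.
Proof.
by move=> h g /=; rewrite B_opB !opprB [LHS]addrACA [RHS]addrACA (addrC (- g)).
Qed.

Lemma subB_op_sym h g : ip (h - B h) g = ip h (g - B g).
Proof. by rewrite ipBl ipBr B_op_sym. Qed.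

Lemma sqr_norm_subB_op_le h : `|h - B h| ^+ 2 <= ip (h - B h) h.
Proof. by rewrite sqr_normB ipBl (ipC h) ip_B_op ipxx; have := sqr_ge0 `|W h|; lra. Qed.

Lemma subB_op_fixed h : h - B h = h -> h = 0.
Proof.
by move=> /eqP; rewrite subr_eq addrC -subr_eq subrr eq_sym => /eqP /B_op_inj.
Qed.

Lemma F_op_le g f : DA f -> `|F_op ip DA A g - F_op ip DA A f| <= `|g - f|.
Proof.
apply: (op_closure_le A_dense) => x x' Dx Dx'; rewrite -B_opB -AB //.
apply: le_trans (norm_B_op_A (DAB Dx Dx')) => /=.
by rewrite ler_peMl // ler1n.
Qed.

Lemma iter_subB_op_cvg0 x : iter k (fun h => h - B h) x @[k --> \oo] --> 0.
Proof.
exact: (iter_cvg0 subB_op_morph subB_op_sym sqr_norm_subB_op_le x subB_op_fixed).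
Qed.

Lemma iterates_dist_le v0 g f y k : DA f -> B y = F_op ip DA A f ->
  `|iterates ip DA A v0 g k - y|
    <= k%:R * `|g - f| + `|iter k (fun h => h - B h) (v0 - y)|.
Proof.
move=> Df By; have yE : y = y - B y + F_op ip DA A f by rewrite By subrK.
have := iter_affine_dist (F_op ip DA A g) v0 subB_op_morph
  (norm_T_le sqr_norm_subB_op_le) yE k.
rewrite /iterates; set v := iter k _ v0; set t := iter k _ (v0 - y) => v_le.
have := ler_distD t (v - y) 0; rewrite !subr0.
have := ler_wpM2l (ler0n _ k) (F_op_le g Df); lra.
Qed.

End ClosedOperator.

End HilbertSpace.

Theorem theorem2 (R : realType) (V : completeNormedModType R)
  (ip : V -> V -> R) (Hip : is_inner_product ip)
  (DA : set V) (A : V -> V)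
  (HAlin : linear_operator DA A) (HAdense : densely_defined DA)
  (HAclosed : closed_operator DA A)
  (f : V) (Hf : DA f) (fd : R -> V)
  (Hfd : forall d : R, 0 < d -> `|fd d - f| <= d)
  (y : V) (Hy : B_op ip DA A y = F_op ip DA A f)
  (Hymin : forall z, B_op ip DA A z = F_op ip DA A f -> `|y| <= `|z|)
  (v0 : V) (Hv0 : forall u, Nstar ip DA A u -> ip v0 u = 0)
  (n : R -> nat)
  (Hn : n @ 0^'+ --> \oo)
  (Hdn : (fun d : R => d * (n d)%:R) @ 0^'+ --> (0 : R)) :
  (fun d : R => `|iterates ip DA A v0 (fd d) (n d) - y|) @ 0^'+ --> (0 : R).
Proof.
pose T v := v - B_op ip DA A v.
have Tx_cvg := iter_subB_op_cvg0 Hip HAlin HAdense HAclosed (v0 - y).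
apply: (@squeeze_cvgr _ _ _ _ (cst 0)
  (fun d => d * (n d)%:R + `|iter (n d) T (v0 - y)|)).
- near=> d; rewrite normr_ge0 /=.
  have d0 : 0 < d by near: d; exact: nbhs_right_gt.
  apply: le_trans (iterates_dist_le Hip HAlin HAdense HAclosed v0 (fd d) (n d) Hf Hy) _.
  by rewrite lerD2r mulrC ler_wpM2r // Hfd.
- exact: cvg_cst.
- rewrite -[X in _ --> X]addr0; apply: cvgD => //.
  rewrite -[X in _ --> X](@normr0 _ V); apply: cvg_norm; exact: cvg_comp Hn Tx_cvg.
Unshelve. all: by end_near.
Qed.
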